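(* Let $0<\varpi<2$, $0\le\beta_e\le1$ and $\epsilon>0$. Let $X$ be binary with distribution $(p,1-p)$, $p\in[0,1/2]$, and $Y$ the output of the binary erasure channel $p(y\mid x)=\begin{pmatrix}1-\beta_e&0&\beta_e\\ 0&1-\beta_e&\beta_e\end{pmatrix}$. Consider $$\max_{p\in[0,1/2]} I(X;Y)\quad\text{subject to}\quad L(\varpi,X)-L(\varpi,X\mid Y)\le\epsilon.$$ Let $C_{\beta_e}=(1-\beta_e)(e^{\varpi/2}-1)$. Then the optimal value equals $1-\beta_e$ if $\epsilon\ge C_{\beta_e}$, and equals $(1-\beta_e)H(p_e)$ if $0<\epsilon\le C_{\beta_e}$, where $p_e\in[0,1/2]$ is the solution of $(1-\beta_e)\big(pe^{\varpi(1-p)}+(1-p)e^{\varpi p}-1\big)=\epsilon$.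
   Context: MIM: $L(\varpi,X)=\sum_i p(x_i)e^{\varpi(1-p(x_i))}$. CMIM: $L(\varpi,X\mid Y)=\sum_{j:\,p(y_j)>0}p(y_j)\sum_i p(x_i\mid y_j)e^{\varpi(1-p(x_i\mid y_j))}$, where the joint law is $p(x_i)p(y_j\mid x_i)$ and $p(x_i\mid y_j)=p(x_i)p(y_j\mid x_i)/p(y_j)$. $I(X;Y)$ denotes mutual information in bits, and $H(q)=-q\log_2 q-(1-q)\log_2(1-q)$ is the binary entropy function. *)

From Stdlib Require Import Reals.
Open Scope R_scope.

Fixpoint rsum (n : nat) (f : nat -> R) : R :=
  match n with
  | O => 0
  | S m => rsum m f + f m
  end.

Definition log2 (x : R) : R := ln x / ln 2.

Definition xlog2x (x : R) : R := if Rlt_dec 0 x then x * log2 x else 0.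

Definition Hb (q : R) : R := - xlog2x q - xlog2x (1 - q).

(* A finite input distribution px on {0..nx-1} and channel W i j = p(y_j | x_i)
   on outputs {0..ny-1}. *)
Definition py (nx : nat) (px : nat -> R) (W : nat -> nat -> R) (j : nat) : R :=
  rsum nx (fun i => px i * W i j).

Definition post (nx : nat) (px : nat -> R) (W : nat -> nat -> R) (i j : nat) : R :=
  px i * W i j / py nx px W j.

Definition MIM (w : R) (nx : nat) (px : nat -> R) : R :=
  rsum nx (fun i => px i * exp (w * (1 - px i))).

Definition CMIM (w : R) (nx ny : nat) (px : nat -> R) (W : nat -> nat -> R) : R :=
  rsum ny (fun j =>
    if Rlt_dec 0 (py nx px W j) then
      py nx px W j *
      rsum nx (fun i => post nx px W i j * exp (w * (1 - post nx px W i j)))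
    else 0).

Definition MI (nx ny : nat) (px : nat -> R) (W : nat -> nat -> R) : R :=
  rsum nx (fun i => rsum ny (fun j =>
    if Rlt_dec 0 (px i * W i j) then
      px i * W i j * log2 (px i * W i j / (px i * py nx px W j))
    else 0)).

Definition bin_px (p : R) (i : nat) : R :=
  match i with O => p | _ => 1 - p end.

(* binary erasure channel, outputs 0, 1, erasure (index 2) *)
Definition bec (b : R) (i j : nat) : R :=
  match i, j with
  | O, O => 1 - b
  | O, 1%nat => 0
  | 1%nat, O => 0
  | 1%nat, 1%nat => 1 - b
  | _, _ => b
  end.

Definition feasible (w b eps p : R) : Prop :=
  0 <= p <= 1/2 /\
  MIM w 2 (bin_px p) - CMIM w 2 3 (bin_px p) (bec b) <= eps.

Definition is_opt_value (w b eps v : R) : Prop :=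
  (exists p, feasible w b eps p /\ MI 2 3 (bin_px p) (bec b) = v) /\
  (forall p, feasible w b eps p -> MI 2 3 (bin_px p) (bec b) <= v).

From Stdlib Require Import Reals Lra.
From Coquelicot Require Import Coquelicot.
Open Scope R_scope.

(* For the input law (p, 1-p) through the erasure channel bec b:
   - the two informative outputs have a degenerate posterior and the erasure
     output has the prior as posterior, so the MIM leakage
     L(w,X) - L(w,X|Y) equals (1-b) (m(p) - 1), where
     m(p) = p e^{w(1-p)} + (1-p) e^{wp} is the MIM of the binary source, and
     I(X;Y) equals (1-b) H(p);
   - for 0 < w < 2 the function m is strictly increasing on [0,1/2], and H is
     nondecreasing there, with H(1/2) = 1.
   Hence the feasible set is an initial segment [0, q] of [0, 1/2]: all of it
   when eps >= C = (1-b)(m(1/2) - 1), and [0, p_e] otherwise, where p_e solves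
   the constraint with equality (it exists by the intermediate value theorem).
   A monotone objective on [0, q] attains its maximum (1-b) H(q) at q. *)

Definition mim2 (w p : R) : R := p * exp (w * (1 - p)) + (1 - p) * exp (w * p).

Definition mim2' (w p : R) : R :=
  exp (w * (1 - p)) * (1 - w * p) - exp (w * p) * (1 - w * (1 - p)).

Lemma mim2_derivative w x : derivable_pt_lim (mim2 w) x (mim2' w x).
Proof.
  apply is_derive_Reals; unfold mim2, mim2'.
  auto_derive; [auto|].
  replace (1 + - x) with (1 - x) by ring; ring.
Qed.

Lemma mim2_continuous w : continuity (mim2 w).
Proof.
  intro x; apply derivable_continuous_pt.
  exists (mim2' w x); apply mim2_derivative.
Qed.

(* For w < 2 the derivative is positive strictly inside (0, 1/2): the larger
   exponential e^{w(1-c)} also carries the larger weight 1 - wc. *)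
Lemma mim2'_pos w c : 0 < w < 2 -> 0 < c < 1/2 -> 0 < mim2' w c.
Proof.
  intros hw hc; unfold mim2'.
  assert (Eorder : exp (w * c) < exp (w * (1 - c))) by (apply exp_increasing; nra).
  assert (Epos : 0 < exp (w * c)) by apply exp_pos.
  destruct (Rle_dec (1 - w * (1 - c)) 0).
  - assert (0 < 1 - w * c) by nra; nra.
  - assert (1 - w * (1 - c) < 1 - w * c) by nra; nra.
Qed.

Lemma mim2_strict_incr w x y :
  0 < w < 2 -> 0 <= x -> x < y -> y <= 1/2 -> mim2 w x < mim2 w y.
Proof.
  intros hw hx hxy hy.
  destruct (MVT_cor2 (mim2 w) (mim2' w) x y hxy) as [c [Hmvt Hc]].
  { intros; apply mim2_derivative. }
  assert (0 < mim2' w c) by (apply mim2'_pos; lra); nra.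
Qed.

Lemma mim2_le_iff w x y : 0 < w < 2 -> 0 <= x <= 1/2 -> 0 <= y <= 1/2 ->
  (mim2 w x <= mim2 w y <-> x <= y).
Proof.
  intros hw hx hy; split; intro hle.
  - destruct (Rle_dec x y) as [|hlt]; [assumption|].
    assert (mim2 w y < mim2 w x) by (apply mim2_strict_incr; lra); lra.
  - destruct (Req_dec x y) as [->|hne]; [lra|].
    left; apply mim2_strict_incr; lra.
Qed.

Lemma mim2_at_0 w : mim2 w 0 = 1.
Proof. unfold mim2; rewrite Rmult_0_r, exp_0; ring. Qed.

Lemma mim2_at_half w : mim2 w (1/2) = exp (w / 2).
Proof.
  unfold mim2.
  replace (w * (1 - 1/2)) with (w / 2) by field.
  replace (w * (1/2)) with (w / 2) by field; ring.
Qed.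

Lemma ln2_pos : 0 < ln 2.
Proof. rewrite <- ln_1; apply ln_increasing; lra. Qed.

Definition hb_ln (p : R) : R := - (p * ln p + (1 - p) * ln (1 - p)) / ln 2.
Definition hb_ln' (p : R) : R := (ln (1 - p) - ln p) / ln 2.

Lemma hb_ln_derivative x : 0 < x < 1 -> derivable_pt_lim hb_ln x (hb_ln' x).
Proof.
  intros hx; apply is_derive_Reals; unfold hb_ln, hb_ln'.
  assert (ln 2 <> 0) by (generalize ln2_pos; lra).
  auto_derive; [repeat split; lra|].
  replace (1 + - x) with (1 - x) by ring; field; lra.
Qed.

Lemma xlog2x_pos x : 0 < x -> xlog2x x = x * (ln x / ln 2).
Proof. intro hx; unfold xlog2x, log2; destruct (Rlt_dec 0 x); lra. Qed.

Lemma Hb_interior x : 0 < x < 1 -> Hb x = hb_ln x.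
Proof.
  intro hx; unfold Hb, hb_ln; rewrite !xlog2x_pos by lra.
  assert (ln 2 <> 0) by (generalize ln2_pos; lra); field; auto.
Qed.

Lemma Hb_at_0 : Hb 0 = 0.
Proof.
  unfold Hb; rewrite Rminus_0_r, (xlog2x_pos 1) by lra.
  unfold xlog2x; destruct (Rlt_dec 0 0); [lra|].
  rewrite ln_1; unfold Rdiv; ring.
Qed.

Lemma Hb_at_half : Hb (1/2) = 1.
Proof.
  unfold Hb; replace (1 - 1/2) with (/2) by field.
  replace (1/2) with (/2) by field.
  rewrite xlog2x_pos, ln_Rinv by lra.
  assert (ln 2 <> 0) by (generalize ln2_pos; lra); field; auto.
Qed.

Lemma Hb_nonneg y : 0 < y <= 1/2 -> 0 <= Hb y.
Proof.
  intro hy; rewrite Hb_interior by lra; unfold hb_ln.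
  assert (ln y < 0) by (rewrite <- ln_1; apply ln_increasing; lra).
  assert (ln (1 - y) < 0) by (rewrite <- ln_1; apply ln_increasing; lra).
  generalize ln2_pos; intro.
  unfold Rdiv; apply Rmult_le_pos; [nra|].
  left; apply Rinv_0_lt_compat; lra.
Qed.

(* The binary entropy is nondecreasing on [0, 1/2]: its derivative
   ln((1-c)/c) / ln 2 is nonnegative there. *)
Lemma Hb_mono x y : 0 <= x -> x <= y -> y <= 1/2 -> Hb x <= Hb y.
Proof.
  intros hx hxy hy.
  destruct (Req_dec x y) as [->|hne]; [lra|].
  destruct (Req_dec x 0) as [->|hx0].
  { rewrite Hb_at_0; apply Hb_nonneg; lra. }
  rewrite !Hb_interior by lra.
  destruct (MVT_cor2 hb_ln hb_ln' x y) as [c [Hmvt Hc]]; [lra| |].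
  { intros; apply hb_ln_derivative; lra. }
  assert (0 <= hb_ln' c).
  { unfold hb_ln'.
    assert (ln c < ln (1 - c)) by (apply ln_increasing; lra).
    generalize ln2_pos; intro.
    unfold Rdiv; apply Rmult_le_pos; [lra|].
    left; apply Rinv_0_lt_compat; lra. }
  nra.
Qed.

Lemma bec_py0 b p : py 2 (bin_px p) (bec b) 0 = p * (1 - b).
Proof. unfold py; simpl; ring. Qed.

Lemma bec_py1 b p : py 2 (bin_px p) (bec b) 1 = (1 - p) * (1 - b).
Proof. unfold py; simpl; ring. Qed.

Lemma bec_py2 b p : py 2 (bin_px p) (bec b) 2 = b.
Proof. unfold py; simpl; ring. Qed.

Lemma guarded_eq (c e v : R) :
  (0 < c -> e = v) -> (~ 0 < c -> v = 0) -> (if Rlt_dec 0 c then e else 0) = v.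
Proof. intros. destruct (Rlt_dec 0 c); auto; symmetry; auto. Qed.

Lemma guarded_zero (e : R) : (if Rlt_dec 0 0 then e else 0) = 0.
Proof. destruct (Rlt_dec 0 0); [lra|reflexivity]. Qed.

(* An output that identifies the input contributes its probability to the
   conditional MIM: the posterior is degenerate, with MIM equal to 1. *)
Lemma cmim_certain_output w y :
  0 <= y -> (if Rlt_dec 0 y then y * (y / y * exp (w * (1 - y / y))) else 0) = y.
Proof.
  intro hy; apply guarded_eq; [|lra].
  intro; replace (y / y) with 1 by (field; lra).
  rewrite Rminus_diag, Rmult_0_r, exp_0; ring.
Qed.

(* An erasure leaves the posterior equal to the prior: it contributes its
   probability times the MIM of the source. *)
Lemma cmim_erasure_output w y q : 0 <= y ->
  (if Rlt_dec 0 y then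
     y * (q * y / y * exp (w * (1 - q * y / y))
          + (1 - q) * y / y * exp (w * (1 - (1 - q) * y / y)))
   else 0) = y * mim2 w q.
Proof.
  intro hy; apply guarded_eq; [|intro; replace y with 0 by lra; ring].
  intro; unfold mim2.
  replace (q * y / y) with q by (field; lra).
  replace ((1 - q) * y / y) with (1 - q) by (field; lra).
  replace (1 - (1 - q)) with q by ring; reflexivity.
Qed.

Lemma bec_leakage w b p : 0 <= b <= 1 -> 0 <= p <= 1 ->
  MIM w 2 (bin_px p) - CMIM w 2 3 (bin_px p) (bec b) = (1 - b) * (mim2 w p - 1).
Proof.
  intros hb hp; unfold MIM, CMIM, post; cbn [rsum bin_px bec].
  rewrite bec_py0, bec_py1, bec_py2, !Rmult_0_r, !Rdiv_0_l, !Rmult_0_l.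
  rewrite ?Rplus_0_l, ?Rplus_0_r.
  rewrite !cmim_certain_output, cmim_erasure_output by nra.
  replace (1 - (1 - p)) with p by ring; unfold mim2; ring.
Qed.

Lemma mi_certain_term q c : 0 <= q -> 0 <= c ->
  (if Rlt_dec 0 (q * c) then q * c * log2 (q * c / (q * (q * c))) else 0)
  = - c * xlog2x q.
Proof.
  intros hq hc; apply guarded_eq.
  - intro hqc; assert (0 < q) by nra.
    rewrite xlog2x_pos by lra; unfold log2.
    replace (q * c / (q * (q * c))) with (/ q) by (field; nra).
    rewrite ln_Rinv by lra; field; generalize ln2_pos; lra.
  - intro hqc; unfold xlog2x; destruct (Rlt_dec 0 q); [|ring].
    replace c with 0 by nra; ring.
Qed.

Lemma mi_erasure_term q b :
  (if Rlt_dec 0 (q * b) then q * b * log2 (q * b / (q * b)) else 0) = 0.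
Proof.
  apply guarded_eq; [|auto].
  intro; replace (q * b / (q * b)) with 1 by (field; nra).
  unfold log2; rewrite ln_1; unfold Rdiv; ring.
Qed.

Lemma bec_mutual_information b p : 0 <= b <= 1 -> 0 <= p <= 1 ->
  MI 2 3 (bin_px p) (bec b) = (1 - b) * Hb p.
Proof.
  intros hb hp; unfold MI; cbn [rsum bin_px bec].
  rewrite bec_py0, bec_py1, bec_py2, !Rmult_0_r, !guarded_zero, !mi_erasure_term.
  rewrite (mi_certain_term p), (mi_certain_term (1 - p)) by lra.
  unfold Hb; ring.
Qed.

Lemma feasible_iff w b eps p : 0 <= b <= 1 ->
  feasible w b eps p <-> 0 <= p <= 1/2 /\ (1 - b) * (mim2 w p - 1) <= eps.
Proof.
  intro hb; unfold feasible; split; intros [hp hc]; split; auto;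
    [rewrite <- bec_leakage | rewrite bec_leakage]; auto; lra.
Qed.

(* If the feasible set is the segment [0, q] of [0, 1/2], the optimum is
   (1-b) H(q), since the objective (1-b) H is nondecreasing on [0, 1/2]. *)
Lemma opt_value_of_segment w b eps q : 0 <= b <= 1 -> 0 <= q <= 1/2 ->
  (forall p, feasible w b eps p <-> 0 <= p <= q) ->
  is_opt_value w b eps ((1 - b) * Hb q).
Proof.
  intros hb hq hfeas; split.
  - exists q; split; [apply hfeas; lra|].
    apply bec_mutual_information; lra.
  - intros p hp; apply hfeas in hp.
    rewrite bec_mutual_information by lra.
    apply Rmult_le_compat_l; [lra|]; apply Hb_mono; lra.
Qed.

Lemma feasible_all w b eps p : 0 < w < 2 -> 0 <= b <= 1 ->
  (1 - b) * (exp (w / 2) - 1) <= eps -> (feasible w b eps p <-> 0 <= p <= 1/2).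
Proof.
  intros hw hb hC; rewrite feasible_iff by assumption; split; [tauto|].
  intro hp; split; [assumption|].
  assert (mim2 w p <= mim2 w (1/2)) by (apply mim2_le_iff; lra).
  rewrite mim2_at_half in *; nra.
Qed.

Lemma feasible_below_threshold w b eps pe p : 0 < w < 2 -> 0 <= b < 1 ->
  0 <= pe <= 1/2 -> (1 - b) * (mim2 w pe - 1) = eps ->
  (feasible w b eps p <-> 0 <= p <= pe).
Proof.
  intros hw hb hpe hthr; rewrite feasible_iff by lra; split.
  - intros [hp hc]; split; [lra|].
    apply (mim2_le_iff w); [lra|lra|lra|].
    apply (Rmult_le_reg_l (1 - b)); lra.
  - intro hp; split; [lra|].
    assert (mim2 w p <= mim2 w pe) by (apply mim2_le_iff; lra); nra.
Qed.

(* The threshold exists by the intermediate value theorem, the leakage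
   growing from 0 at p = 0 to C at p = 1/2. *)
Lemma threshold_exists w b eps : 0 < eps <= (1 - b) * (exp (w / 2) - 1) ->
  exists pe, 0 <= pe <= 1/2 /\ (1 - b) * (mim2 w pe - 1) = eps.
Proof.
  intro heps.
  set (g p := (1 - b) * (mim2 w p - 1) - eps).
  assert (hg : continuity g).
  { apply continuity_minus; [|apply continuity_const; intros ? ?; auto].
    apply continuity_mult; [apply continuity_const; intros ? ?; auto|].
    apply continuity_minus; [apply mim2_continuous|].
    apply continuity_const; intros ? ?; auto. }
  destruct (IVT_cor g 0 (1/2) hg) as [pe [hpe hroot]]; [lra| |].
  { unfold g; rewrite mim2_at_0, mim2_at_half; nra. }
  exists pe; split; [assumption|]; unfold g in hroot; lra.
Qed.

Theorem proposition6 (w b eps : R)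
  (hw : 0 < w < 2) (hb : 0 <= b <= 1) (he : 0 < eps) :
  let C := (1 - b) * (exp (w / 2) - 1) in
  (C <= eps -> is_opt_value w b eps (1 - b)) /\
  (eps <= C ->
     (exists pe, 0 <= pe <= 1/2 /\
        (1 - b) * (pe * exp (w * (1 - pe)) + (1 - pe) * exp (w * pe) - 1) = eps) /\
     (forall pe, 0 <= pe <= 1/2 ->
        (1 - b) * (pe * exp (w * (1 - pe)) + (1 - pe) * exp (w * pe) - 1) = eps ->
        is_opt_value w b eps ((1 - b) * Hb pe))).
Proof.
  intro C; split.
  - intro hC.
    replace (1 - b) with ((1 - b) * Hb (1/2)) by (rewrite Hb_at_half; ring).
    apply opt_value_of_segment; [assumption|lra|].
    intro p; apply feasible_all; assumption.
  - intro hC.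
    assert (hb1 : b < 1).
    { destruct (Req_dec b 1) as [->|]; [unfold C in hC; lra|lra]. }
    split.
    + apply threshold_exists; unfold C in hC; lra.
    + intros pe hpe hthr; fold (mim2 w pe) in hthr.
      apply opt_value_of_segment; [assumption|assumption|].
      intro p; apply feasible_below_threshold; lra || assumption.
Qed.
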